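(* Let $G$ and $H$ be nontrivial finite groups with $\gcd(|G|,|H|)=1$. Then the cyclic graph $\Delta(G\times H)$ is connected and $\mathrm{diam}(\Delta(G\times H))\le 3$.
   Context: For a finite group $X$, the cyclic graph $\Delta(X)$ has vertex set $X^{\#}=X\setminus\{1\}$, and distinct vertices $x,y$ are adjacent if and only if the subgroup $\langle x,y\rangle$ is cyclic. The diameter is the maximum graph distance between two vertices. *)

From mathcomp Require Import all_boot all_fingroup all_solvable.
Set Implicit Arguments. Unset Strict Implicit. Unset Printing Implicit Defensive.
Local Open Scope group_scope.

Definition cyc_adj (gT : finGroupType) (X : {set gT}) : rel gT :=
  fun x y => [&& x \in X^#, y \in X^#, x != y & cyclic <<[set x; y]>>].

Definition cyc_walk (gT : finGroupType) (X : {set gT}) (x y : gT) (n : nat) : Prop :=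
  exists p : seq gT, [/\ path (cyc_adj X) x p, last x p = y & size p = n].

Definition cyc_connected (gT : finGroupType) (X : {set gT}) : Prop :=
  forall x y, x \in X^# -> y \in X^# -> exists n, cyc_walk X x y n.

Definition cyc_diam_le (gT : finGroupType) (X : {set gT}) (d : nat) : Prop :=
  forall x y, x \in X^# -> y \in X^# -> exists2 n, n <= d & cyc_walk X x y n.

From mathcomp Require Import all_boot all_fingroup all_solvable.
Set Implicit Arguments. Unset Strict Implicit. Unset Printing Implicit Defensive.
Local Open Scope group_scope.

(* When #[g] and #[h] are coprime, <(g, h)> = <g> x <h>. Given vertices
   x = (g, h) and y = (g', h'), choose nontrivial a in G and b in H with
   g \in <a> and h' \in <b>; then consecutive vertices of
   x -- (a, 1) -- (1, b) -- y lie in the cyclic groups <(a, h)>, <(a, b)> and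
   <(g', b)> respectively, so they are equal or adjacent. *)

Section CyclicWalks.
Variables (gT : finGroupType) (X : {set gT}).

Definition cyc_walk_le (x y : gT) (k : nat) : Prop :=
  exists2 n, n <= k & cyc_walk X x y n.

Lemma cyc_walk_cat x y z m n :
  cyc_walk X x y m -> cyc_walk X y z n -> cyc_walk X x z (m + n).
Proof.
move=> [p [px <- <-]] [q [qy <- <-]].
by exists (p ++ q); rewrite cat_path last_cat size_cat px.
Qed.

Lemma cyc_walk_le_trans x y z m n :
  cyc_walk_le x y m -> cyc_walk_le y z n -> cyc_walk_le x z (m + n).
Proof.
move=> [m' le_m' wxy] [n' le_n' wyz].
by exists (m' + n'); [rewrite leq_add | apply: cyc_walk_cat wxy wyz].
Qed.

Lemma cyc_walk_le_cycle u v w :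
  u \in X^# -> v \in X^# -> u \in <[w]> -> v \in <[w]> -> cyc_walk_le u v 1%N.
Proof.
move=> uX vX uw vw; have [<-|neq_uv] := eqVneq u v; first by exists 0 => //; exists [::].
exists 1%N => //; exists [:: v]; split=> //=; rewrite andbT /cyc_adj uX vX neq_uv.
apply: cyclicS (cycle_cyclic w); rewrite gen_subG.
by apply/subsetP => z /set2P[] ->.
Qed.

Lemma cyc_diam_le_connected d : cyc_diam_le X d -> cyc_connected X.
Proof. by move=> diamX x y xX yX; have [n _ wxy] := diamX x y xX yX; exists n. Qed.

End CyclicWalks.

Lemma cycle_pair (gT1 gT2 : finGroupType) (g : gT1) (h : gT2) :
  coprime #[g] #[h] -> <[(g, h)]> = setX <[g]> <[h]>.
Proof.
move=> co_gh; have gh_split : (g, h) = pairg1 gT2 g * pair1g gT1 h.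
  by rewrite /pairg1 /pair1g; congr pair; rewrite /= ?mulg1 ?mul1g.
have comm_gh : commute (pairg1 gT2 g) (pair1g gT1 h).
  by rewrite /commute /pairg1 /pair1g; congr pair; rewrite /= ?mulg1 ?mul1g.
rewrite gh_split cycleM ?order_injm ?injm_pairg1 ?injm_pair1g ?inE //.
by rewrite -!morphim_cycle ?inE // morphim_pairg1 morphim_pair1g setX_prod.
Qed.

Lemma nontrivial_cycle_cover (gT : finGroupType) (G : {group gT}) g :
  G :!=: 1 -> g \in G -> exists2 a, a \in G^# & g \in <[a]>.
Proof.
move=> /trivgPn[b bG ntb] gG; have [->|ntg] := eqVneq g 1.
  by exists b; rewrite ?group1 // !inE ntb.
by exists g; rewrite ?cycle_id // !inE ntg.
Qed.

Lemma in_setXD1 (gT1 gT2 : finGroupType) (G : {set gT1}) (H : {set gT2}) u v :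
  ((u, v) \in (setX G H)^#) = [&& (u != 1) || (v != 1), u \in G & v \in H].
Proof. by rewrite !inE /= xpair_eqE negb_and. Qed.

Section CoprimeProduct.
Variables (gT1 gT2 : finGroupType) (G : {group gT1}) (H : {group gT2}).
Hypothesis coGH : coprime #|G| #|H|.

Lemma mem_cycle_pair g h u v : g \in G -> h \in H ->
  u \in <[g]> -> v \in <[h]> -> (u, v) \in <[(g, h)]>.
Proof.
move=> gG hH ug vh; rewrite cycle_pair ?inE ?ug //.
exact: coprime_dvdl (order_dvdG gG) (coprime_dvdr (order_dvdG hH) coGH).
Qed.

Lemma coprime_setX_cyc_diam_le3 :
  G :!=: 1 -> H :!=: 1 -> cyc_diam_le (setX G H) 3.
Proof.
move=> ntG ntH [g h] [g' h'] xX yX.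
move: (xX) (yX); rewrite !in_setXD1 => /and3P[_ gG hH] /and3P[_ gG' hH'].
have [a /setD1P[nta aG] ga] := nontrivial_cycle_cover ntG gG.
have [b /setD1P[ntb bH] h'b] := nontrivial_cycle_cover ntH hH'.
have a1X : (a, 1) \in (setX G H)^# by rewrite in_setXD1 nta aG group1.
have b1X : (1, b) \in (setX G H)^# by rewrite in_setXD1 ntb bH group1 orbT.
have x_a1 := cyc_walk_le_cycle xX a1X
  (mem_cycle_pair aG hH ga (cycle_id h)) (mem_cycle_pair aG hH (cycle_id a) (group1 _)).
have a1_b1 := cyc_walk_le_cycle a1X b1X
  (mem_cycle_pair aG bH (cycle_id a) (group1 _)) (mem_cycle_pair aG bH (group1 _) (cycle_id b)).
have b1_y := cyc_walk_le_cycle b1X yX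
  (mem_cycle_pair gG' bH (group1 _) (cycle_id b)) (mem_cycle_pair gG' bH (cycle_id g') h'b).
exact: cyc_walk_le_trans (cyc_walk_le_trans x_a1 a1_b1) b1_y.
Qed.

End CoprimeProduct.

Theorem lemma4p1 (gT1 gT2 : finGroupType) (G : {group gT1}) (H : {group gT2}) :
  G :!=: 1%g -> H :!=: 1%g -> coprime #|G| #|H| ->
  cyc_connected (setX G H) /\ cyc_diam_le (setX G H) 3.
Proof.
move=> ntG ntH coGH.
have diam3 := coprime_setX_cyc_diam_le3 coGH ntG ntH.
by split; first exact: cyc_diam_le_connected diam3.
Qed.
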